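(* Let $W$ be an admissible sequence of vertices and $I$ an admissible sequence of indices with $0\le|W|=|I|\le|V|-2$, let $Z$ be a complex $|E|\times\frac{k(k+1)}2$ matrix, and let $\epsilon>0$ and $0\le\theta<2\pi/3$ be reals with $\epsilon<\cos(\theta/2)$. Suppose that for any two vertices $u,v\in V$ and any $i,j\in\{1,\dots,k\}$ such that $(W,u,v)$ and $(I,i,j)$ are admissible, we have $\mathcal{Q}^{(W,u,v)}_{(I,i,j)}(Z)\ne0$, $\mathcal{Q}^{(W,u,v)}_{(I,j,i)}(Z)\ne0$ and $$\left|\frac{\mathcal{Q}^{(W,u,v)}_{(I,i,j)}(Z)}{\mathcal{Q}^{(W,u,v)}_{(I,j,i)}(Z)}-1\right|\le\epsilon.$$ (1) Suppose in addition that for any $u,v\in V$ and any $i,j_1,j_2\in\{1,\dots,k\}$ such that $(W,u,v)$, $(I,i,j_1)$, $(I,i,j_2)$ are admissible, the angle between $\mathcal{Q}^{(W,u,v)}_{(I,i,j_1)}(Z)$ and $\mathcal{Q}^{(W,u,v)}_{(I,i,j_2)}(Z)$ does not exceed $\theta$. Then for any $u,v\in V$ and any $i$ such that $(W,u)$, $(W,v)$, $(I,i)$ are admissible, we have $\mathcal{Q}^{(W,u)}_{(I,i)}(Z)\ne0$, $\mathcal{Q}^{(W,v)}_{(I,i)}(Z)\ne0$, and the angle between them does not exceed $\arcsin\frac{\epsilon}{\cos(\theta/2)}$. (2) Suppose instead that for any $u,v_1,v_2\in V$ and any $i,j\in\{1,\dots,k\}$ such that $(W,u,v_1)$, $(W,u,v_2)$,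 $(I,i,j)$ are admissible, the angle between $\mathcal{Q}^{(W,u,v_1)}_{(I,i,j)}(Z)$ and $\mathcal{Q}^{(W,u,v_2)}_{(I,i,j)}(Z)$ does not exceed $\theta$. Then for any $u\in V$ and any $i,j$ such that $(W,u)$, $(I,i)$, $(I,j)$ are admissible, we have $\mathcal{Q}^{(W,u)}_{(I,i)}(Z)\ne0$, $\mathcal{Q}^{(W,u)}_{(I,j)}(Z)\ne0$, and the angle between them does not exceed $\arcsin\frac{\epsilon}{\cos(\theta/2)}$.
   Context: Fix a finite simple undirected graph $G=(V,E)$ and positive integers $m=(\mu_1,\dots,\mu_k)$ with $\sum\mu_i=|V|$. A complex $|E|\times\frac{k(k+1)}2$ matrix $Z=(z^{uv}_{ij})$ has entries indexed by edges $\{u,v\}\in E$ and unordered pairs $\{i,j\}$, $1\le i,j\le k$. A sequence $W=(v_1,\dots,v_n)$ of vertices is admissible if the $v_j$ are distinct. For a sequence $I=(i_1,\dots,i_n)$ of indices in $\{1,\dots,k\}$, $\nu_i(I)=|\{j: i_j=i\}|$; $I$ is admissible if $\nu_i(I)\le\mu_i$ for all $i$. For admissible $W=(v_1,\dots,v_n)$, $I=(i_1,\dots,i_n)$ of equal length, $$\mathcal{Q}^W_I(Z)=\sum_{\substack{\phi:V\to\{1,\dots,k\}\\ |\phi^{-1}(i)|=\mu_i\ (i=1,\dots,k)\\ \phi(v_j)=i_j\ (j=1,\dots,n)}}\ \prod_{\{u,v\}\in E} z^{uv}_{\phi(u)\phi(v)}.$$ $(W,v)$ denotes $W$ with vertex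 $v$ appended, $(I,i)$ denotes $I$ with index $i$ appended, and similarly for several elements. Angles are between nonzero complex numbers regarded as vectors in $\mathbb{R}^2\cong\mathbb{C}$. *)

From HB Require Import structures.
From mathcomp Require Import all_boot all_order all_algebra.
From mathcomp Require Import complex.
From mathcomp Require Import reals trigo.
Set Implicit Arguments. Unset Strict Implicit. Unset Printing Implicit Defensive.
Import Order.TTheory GRing.Theory Num.Theory.
Local Open Scope ring_scope.

Definition cabs (R : realType) (z : R[i]) : R :=
  Num.sqrt (complex.Re z ^+ 2 + complex.Im z ^+ 2).

Definition cangle (R : realType) (a b : R[i]) : R :=
  acos ((complex.Re a * complex.Re b + complex.Im a * complex.Im b) / (cabs a * cabs b)).

Definition simple_graph (V : finType) (E : {set {set V}}) : Prop :=
  forall A, A \in E -> #|A| = 2%N.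

Definition adm_W (V : finType) (W : seq V) : bool := uniq W.

Definition adm_I (k : nat) (mu : 'I_k -> nat) (I : seq 'I_k) : bool :=
  [forall i, count_mem i I <= mu i]%N.

(* The entry z^{uv}_{ij} is  Z [set u; v] [set i; j]
   (edge {u,v}, unordered index pair {i,j}); note phi @: [set u; v]
   = [set phi u; phi v]. *)
Definition Qpoly (R : realType) (V : finType) (E : {set {set V}}) (k : nat)
    (mu : 'I_k -> nat) (Z : {set V} -> {set 'I_k} -> R[i])
    (W : seq V) (I : seq 'I_k) : R[i] :=
  \sum_(phi : {ffun V -> 'I_k} |
          [forall i, #|phi @^-1: [set i]| == mu i] &&
          all2 (fun v i => phi v == i) W I)
    \prod_(A in E) Z A (phi @: A).

(* Both parts rest on one estimate in the plane. If nonzero b_j pairwise make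
   angles at most theta < 2pi/3, then the bisector of a widest pair shows, via the
   vanishing Gram determinant of three plane vectors, that all b_j lie in a cone
   of aperture theta; hence |sum b_j| >= cos(theta/2) sum |b_j|. If moreover
   |a_j / b_j - 1| <= eps, then |sum a_j - sum b_j| <= eps sum |b_j|
   <= eps / cos(theta/2) |sum b_j|, which bounds the angle between sum a_j and
   sum b_j by arcsin(eps / cos(theta/2)).
   For (1), summing Q^(W,u,v)_(I,i,j) over j gives Q^(W,u)_(I,i), and summing
   Q^(W,u,v)_(I,j,i) = Q^(W,v,u)_(I,i,j) gives Q^(W,v)_(I,i). For (2), summing
   over the new vertex v gives (mu_j - nu_j(I,i)) Q^(W,u)_(I,i) and
   (mu_i - nu_i(I,j)) Q^(W,u)_(I,j), positive multiples of the two targets. *)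

From HB Require Import structures.
From mathcomp Require Import all_boot all_order all_algebra.
From mathcomp Require Import complex.
From mathcomp Require Import reals trigo.
From mathcomp Require Import ring lra zify.
Import Order.TTheory GRing.Theory Num.Theory.
Local Open Scope ring_scope.

Lemma bisector_inequality (R : realFieldType) (a b C : R) :
  C <= a -> C <= b -> 0 < 2 * C + 1 -> C <= 1 ->
  1 + 2 * a * b * C - a ^+ 2 - b ^+ 2 - C ^+ 2 = 0 -> 1 + C <= a + b.
Proof.
move=> Ca Cb C_gt C_le1 gram0.
have sqr_le : (a - b) ^+ 2 <= (a + b - 2 * C) ^+ 2 by nra.
have split_sqr : 2 * ((a + b - (1 + C)) * (a + b - (1 + C) * (2 * C - 1))) =
    (1 + C) * (a + b - 2 * C) ^+ 2 - (1 + C) * (a - b) ^+ 2 by nra.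
have prod_ge0 : 0 <= (a + b - (1 + C)) * (a + b - (1 + C) * (2 * C - 1)) by nra.
have : (1 - C) * (2 * C + 1) <= a + b - (1 + C) * (2 * C - 1) by nra.
case: (lerP (1 + C) (a + b)) => // lt_ab.
have : a + b - (1 + C) * (2 * C - 1) <= 0 by nra.
nra.
Qed.

Section PlaneGeometry.
Context {R : realType}.
Implicit Types x y A B : R[i].

Lemma ReB x y : complex.Re (x - y) = complex.Re x - complex.Re y.
Proof. exact: (raddfB (@complex.Re R : Rcomplex R -> R)). Qed.

Lemma ImB x y : complex.Im (x - y) = complex.Im x - complex.Im y.
Proof. exact: (raddfB (@complex.Im R : Rcomplex R -> R)). Qed.

Lemma Re_sum (J : finType) (P : pred J) (F : J -> R[i]) :
  complex.Re (\sum_(j | P j) F j) = \sum_(j | P j) complex.Re (F j).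
Proof. exact: (raddf_sum (@complex.Re R : Rcomplex R -> R)). Qed.

Lemma Im_sum (J : finType) (P : pred J) (F : J -> R[i]) :
  complex.Im (\sum_(j | P j) F j) = \sum_(j | P j) complex.Im (F j).
Proof. exact: (raddf_sum (@complex.Im R : Rcomplex R -> R)). Qed.

Lemma cabsE x : cabs x = Normc.normc x. Proof. by case: x. Qed.

Lemma cabs0 : cabs 0 = 0 :> R.
Proof. by rewrite cabsE Normc.normc0. Qed.

Lemma cabs_ge0 x : 0 <= cabs x. Proof. exact: sqrtr_ge0. Qed.

Lemma cabs_sqr x : cabs x ^+ 2 = complex.Re x ^+ 2 + complex.Im x ^+ 2.
Proof. by rewrite /cabs sqr_sqrtr // addr_ge0 // sqr_ge0. Qed.

Lemma cabs_eq0 x : (cabs x == 0) = (x == 0).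
Proof.
apply/eqP/eqP => [|->]; first by rewrite cabsE; exact: Normc.eq0_normc.
exact: cabs0.
Qed.

Lemma cabs_gt0 {x} : x != 0 -> 0 < cabs x.
Proof. by move=> x0; rewrite lt_def cabs_eq0 x0 cabs_ge0. Qed.

Lemma cabsM x y : cabs (x * y) = cabs x * cabs y.
Proof. rewrite !cabsE; exact: Normc.normcM. Qed.

Lemma cabs_real (a : R) : 0 <= a -> cabs (a%:C)%C = a.
Proof. by move=> a0; rewrite /cabs /= expr0n /= addr0 sqrtr_sqr ger0_norm. Qed.

Lemma ler_cabsD x y : cabs (x + y) <= cabs x + cabs y.
Proof. rewrite !cabsE; exact: le_normcD. Qed.

Lemma ler_cabs_sum (J : finType) (P : pred J) (F : J -> R[i]) :
  cabs (\sum_(j | P j) F j) <= \sum_(j | P j) cabs (F j).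
Proof.
elim/big_rec2: _ => [|j y1 y2 _ h]; first by rewrite cabs0.
by apply: le_trans (ler_cabsD _ _) _; rewrite lerD2l.
Qed.

Definition dotc x y := complex.Re x * complex.Re y + complex.Im x * complex.Im y.
Definition crossc x y := complex.Re x * complex.Im y - complex.Im x * complex.Re y.
Definition cosangle x y := dotc x y / (cabs x * cabs y).

Lemma dotc_sum (J : finType) (P : pred J) (F : J -> R[i]) y :
  dotc (\sum_(j | P j) F j) y = \sum_(j | P j) dotc (F j) y.
Proof. by rewrite /dotc Re_sum Im_sum !mulr_suml -big_split. Qed.

Lemma dotc_crossc_sqr x y :
  dotc x y ^+ 2 + crossc x y ^+ 2 = cabs x ^+ 2 * cabs y ^+ 2.
Proof. by rewrite !cabs_sqr /dotc /crossc; ring. Qed.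

Lemma ler_norm_dotc x y : `|dotc x y| <= cabs x * cabs y.
Proof.
rewrite -ler_sqr ?nnegrE ?mulr_ge0 ?cabs_ge0 // real_normK ?num_real // exprMn.
by rewrite -dotc_crossc_sqr lerDl sqr_ge0.
Qed.

Lemma cosangle_itv {x y} : x != 0 -> y != 0 -> -1 <= cosangle x y <= 1.
Proof.
move=> x0 y0; have xy_gt0 : 0 < cabs x * cabs y by rewrite mulr_gt0 ?cabs_gt0.
rewrite -ler_norml /cosangle normrM normfV (gtr0_norm xy_gt0).
by rewrite ler_pdivrMr // mul1r ler_norm_dotc.
Qed.

(* The Gram determinant of three vectors of the plane vanishes. *)
Lemma gram_cosangle {x y z} : x != 0 -> y != 0 -> z != 0 ->
  1 + 2 * cosangle x y * cosangle x z * cosangle y z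
    - cosangle x y ^+ 2 - cosangle x z ^+ 2 - cosangle y z ^+ 2 = 0.
Proof.
move=> /cabs_gt0/lt0r_neq0 x0 /cabs_gt0/lt0r_neq0 y0 /cabs_gt0/lt0r_neq0 z0.
have -> : 1 + 2 * cosangle x y * cosangle x z * cosangle y z
    - cosangle x y ^+ 2 - cosangle x z ^+ 2 - cosangle y z ^+ 2 =
  (cabs x ^+ 2 * cabs y ^+ 2 * cabs z ^+ 2 + 2 * dotc x y * dotc x z * dotc y z
   - cabs z ^+ 2 * dotc x y ^+ 2 - cabs y ^+ 2 * dotc x z ^+ 2
   - cabs x ^+ 2 * dotc y z ^+ 2) / (cabs x ^+ 2 * cabs y ^+ 2 * cabs z ^+ 2).
  by rewrite /cosangle; field; rewrite x0 y0 z0.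
by rewrite [X in X / _](_ : _ = 0) ?mul0r // !cabs_sqr /dotc; ring.
Qed.

Definition bisector x y : R[i] :=
  Complex (complex.Re x / cabs x + complex.Re y / cabs y)
          (complex.Im x / cabs x + complex.Im y / cabs y).

Lemma dotc_bisector z x y : z != 0 -> x != 0 -> y != 0 ->
  dotc z (bisector x y) = cabs z * (cosangle z x + cosangle z y).
Proof.
move=> /cabs_gt0/lt0r_neq0 z0 /cabs_gt0/lt0r_neq0 x0 /cabs_gt0/lt0r_neq0 y0.
by rewrite /cosangle /dotc /=; field; rewrite z0 x0 y0.
Qed.

Lemma cabs_bisector_sqr x y : x != 0 -> y != 0 ->
  cabs (bisector x y) ^+ 2 = 2 + 2 * cosangle x y.
Proof.
move=> /cabs_gt0/lt0r_neq0 x0 /cabs_gt0/lt0r_neq0 y0.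
rewrite cabs_sqr /cosangle /dotc /=; apply/eqP; rewrite -subr_eq0; apply/eqP.
rewrite (_ : _ - _ = (complex.Re x ^+ 2 + complex.Im x ^+ 2 - cabs x ^+ 2) / cabs x ^+ 2
                   + (complex.Re y ^+ 2 + complex.Im y ^+ 2 - cabs y ^+ 2) / cabs y ^+ 2).
  by rewrite -!cabs_sqr !subrr !mul0r addr0.
by field; rewrite x0 y0.
Qed.

(* Geometrically: if z makes angles at most ang(x, y) < 2pi/3 with both x and y,
   then z lies between x and y. *)
Lemma dotc_bisector_ge z x y : z != 0 -> x != 0 -> y != 0 ->
  cosangle x y <= cosangle z x -> cosangle x y <= cosangle z y ->
  0 < 2 * cosangle x y + 1 ->
  (1 + cosangle x y) * cabs z <= dotc z (bisector x y).
Proof.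
move=> z0 x0 y0 zx zy xy_gt.
rewrite dotc_bisector // mulrC ler_wpM2l ?cabs_ge0 //.
apply: bisector_inequality (gram_cosangle z0 x0 y0) => //.
by case/andP: (cosangle_itv x0 y0).
Qed.

(* For a widest pair (x, y) of the family, every b j has projection at least
   (1 + cos(x, y)) |b j| on the bisector w of x and y, and |w|^2 = 2 (1 + cos(x, y)). *)
Lemma cabs_sum_cone (J : finType) (P : pred J) (b : J -> R[i]) (c : R) :
  (forall j, P j -> b j != 0) ->
  (forall j l, P j -> P l -> c <= cosangle (b j) (b l)) -> 0 < 2 * c + 1 ->
  (1 + c) * (\sum_(j | P j) cabs (b j)) ^+ 2 <= 2 * cabs (\sum_(j | P j) b j) ^+ 2.
Proof.
move=> b_neq0 b_cos c_gt.
case: (pickP P) => [j0 Pj0|P0]; last by rewrite !big_pred0 // cabs0 expr0n !mulr0.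
have [[x y] /andP[/= Px Py] widest] := @arg_minP _ _ _ (j0, j0)
  (fun p : J * J => P p.1 && P p.2) (fun p => cosangle (b p.1) (b p.2))
  ltac:(by rewrite /= Pj0).
set C := cosangle (b x) (b y) in widest *.
have cC : c <= C by exact: b_cos.
have C_gt : 0 < 2 * C + 1 by lra.
set w := bisector (b x) (b y).
set S := \sum_(j | P j) cabs (b j); set B := \sum_(j | P j) b j.
have S_ge0 : 0 <= S by rewrite sumr_ge0 // => j _; exact: cabs_ge0.
have S_le : (1 + C) * S <= cabs B * cabs w.
  apply: le_trans (le_trans (ler_norm _) (ler_norm_dotc B w)).
  rewrite /S /B dotc_sum mulr_sumr; apply: ler_sum => j Pj.
  apply: dotc_bisector_ge; rewrite ?b_neq0 //.
    by apply: (widest (j, x)); rewrite /= Pj.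
  by apply: (widest (j, y)); rewrite /= Pj.
have w_sqr : cabs w ^+ 2 = 2 * (1 + C).
  by rewrite cabs_bisector_sqr ?b_neq0 // /C; ring.
have C_gt1 : 0 < 1 + C by lra.
have sqr_le : (1 + C) * ((1 + C) * S ^+ 2) <= (1 + C) * (2 * cabs B ^+ 2).
  rewrite [X in X <= _](_ : _ = ((1 + C) * S) ^+ 2); last by ring.
  rewrite [X in _ <= X](_ : _ = (cabs B * cabs w) ^+ 2); last by rewrite exprMn w_sqr; ring.
  by rewrite ler_sqr ?nnegrE ?mulr_ge0 ?cabs_ge0 //; lra.
rewrite ler_pM2l // in sqr_le; apply: le_trans sqr_le; rewrite ler_wpM2r ?sqr_ge0 //; lra.
Qed.

End PlaneGeometry.

Section Trigonometry.
Context {R : realType}.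
Implicit Types t r th : R.

Lemma cos_le_of_acos_le t th : -1 <= t <= 1 -> 0 <= th <= pi -> acos t <= th ->
  cos th <= t.
Proof.
move=> t_itv th_itv acos_le; rewrite leNgt; apply/negP => t_lt.
have : cos (acos t) < cos th by rewrite acosK // in_itv.
by rewrite ltr_cos ?in_itv //= ?acos_ge0 ?acos_lepi // => /lt_le_trans/(_ acos_le); rewrite ltxx.
Qed.

Lemma cos_pi3 : cos (pi / 3%:R) = 2^-1 :> R.
Proof.
set x := pi / 3%:R.
have pi_gt0 := pi_gt0 R.
have cos_x_gt0 : 0 < cos x by apply: cos_gt0_pihalf; rewrite /x; apply/andP; split; lra.
have := @cospi R; rewrite (_ : pi = x + x *+ 2); last by rewrite /x mulr2n; field.
rewrite cosD cos_mulr2n sin_mulr2n !mulr2n.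
have := sin2cos2 x; move: cos_x_gt0; move: (cos x) (sin x) => c s c_gt0 cs1 cos3x.
have /eqP : (c + 1) * (2 * c - 1) ^+ 2 = 0 by nra.
rewrite mulf_eq0 expf_eq0 /= => /orP[/eqP|/eqP]; first by lra.
move=> c_half; apply: (@mulfI _ 2); first by rewrite pnatr_eq0.
by rewrite mulfV ?pnatr_eq0 //; lra.
Qed.

Lemma cos_half_gt {th} : 0 <= th -> th < 2%:R * pi / 3%:R -> 2^-1 < cos (th / 2%:R).
Proof.
move=> th_ge0 th_lt; rewrite -[X in X < _]cos_pi3.
have pi_gt0 := pi_gt0 R.
by rewrite ltr_cos ?in_itv /=; [lra|apply/andP; split; lra|apply/andP; split; lra].
Qed.

Lemma asin_ge0 r : 0 <= r <= 1 -> 0 <= asin r.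
Proof.
move=> /andP[r_ge0 r_le1]; have r_itv : -1 <= r <= 1 by apply/andP; split; lra.
have pi_gt0 := pi_gt0 R.
rewrite leNgt; apply/negP => asin_lt0.
have : sin (asin r) < sin 0.
  by rewrite ltr_sin ?in_itv /= ?asin_geNpi2 ?asin_lepi2 //; apply/andP; split; lra.
by rewrite asinK ?in_itv // sin0; lra.
Qed.

Lemma acos_le_asin t r : 0 <= r < 1 -> -1 <= t <= 1 ->
  Num.sqrt (1 - r ^+ 2) <= t -> acos t <= asin r.
Proof.
move=> /andP[r_ge0 r_lt1] t_itv sqrt_le.
have r_itv : -1 <= r <= 1 by apply/andP; split; lra.
have pi_gt0 := pi_gt0 R.
have asin_itv : asin r \in `[0, pi].
  rewrite in_itv /= asin_ge0 ?(ltW r_lt1) ?r_ge0 //=.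
  by apply: le_trans (asin_lepi2 r_itv) _; lra.
rewrite leNgt; apply/negP => lt_acos.
have : cos (acos t) < cos (asin r) by rewrite ltr_cos // in_itv /= acos_ge0 ?acos_lepi.
by rewrite acosK ?in_itv // cos_asin //; lra.
Qed.

End Trigonometry.

Section Angles.
Context {R : realType}.
Implicit Types x y A B : R[i].

Lemma cangle_refl x : x != 0 -> cangle x x = 0.
Proof.
move=> /cabs_gt0/lt0r_neq0 x0; rewrite -acos1; congr acos.
by rewrite -!expr2 -cabs_sqr divff // expf_neq0.
Qed.

Lemma cangle_scale (a b : R) x y : 0 < a -> 0 < b ->
  cangle ((a%:C)%C * x) ((b%:C)%C * y) = cangle x y.
Proof.
move=> a_gt0 b_gt0; rewrite /cangle !cabsM !cabs_real ?ltW //; congr acos.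
set d := _ + _; set m := cabs _ * cabs _.
rewrite (_ : d = (a * b) * dotc x y); last first.
  by rewrite /d /dotc; case: (x) (y) => [? ?] [? ?] /=; ring.
rewrite mulrACA -mulf_div divff ?mul1r // mulf_neq0 ?gt_eqF //.
Qed.

Lemma dotc_ge_of_near {A B r} : cabs (A - B) <= r * cabs B ->
  (1 - r) * cabs B ^+ 2 <= dotc A B.
Proof.
move=> near; have := ler_norm_dotc (A - B) B; rewrite ler_norml => /andP[dot_ge _].
have -> : dotc A B = cabs B ^+ 2 + dotc (A - B) B.
  by rewrite cabs_sqr /dotc ReB ImB; ring.
have := cabs_ge0 B; nra.
Qed.

Lemma crossc_sqr_le_of_near {A B r} : 0 <= r -> cabs (A - B) <= r * cabs B ->
  crossc A B ^+ 2 <= r ^+ 2 * (cabs A ^+ 2 * cabs B ^+ 2).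
Proof.
move=> r_ge0 near.
have -> : crossc A B = - crossc A (A - B) by rewrite /crossc ReB ImB; ring.
rewrite sqrrN; apply: le_trans (_ : cabs A ^+ 2 * cabs (A - B) ^+ 2 <= _).
  by rewrite -dotc_crossc_sqr lerDr sqr_ge0.
rewrite [r ^+ 2 * _]mulrCA; apply: ler_wpM2l; first exact: sqr_ge0.
rewrite -exprMn.
by rewrite ler_sqr ?nnegrE ?mulr_ge0 ?cabs_ge0.
Qed.

Lemma cangle_le_asin A B r : B != 0 -> 0 <= r < 1 ->
  cabs (A - B) <= r * cabs B -> A != 0 /\ cangle A B <= asin r.
Proof.
move=> B0 /andP[r_ge0 r_lt1] near; have B_gt0 := cabs_gt0 B0.
have dot_ge := dotc_ge_of_near near.
have dot_gt0 : 0 < dotc A B.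
  by apply: lt_le_trans dot_ge; rewrite mulr_gt0 ?exprn_gt0 // subr_gt0.
have A0 : A != 0 by apply: contraTneq dot_gt0 => ->; rewrite /dotc /= !mul0r addr0 ltxx.
split => //; have AB_gt0 : 0 < cabs A * cabs B by rewrite mulr_gt0 ?cabs_gt0.
have cos_ge0 : 0 <= cosangle A B by rewrite divr_ge0 ?ltW.
have cos_sqr_ge : 1 - r ^+ 2 <= cosangle A B ^+ 2.
  rewrite expr_div_n ler_pdivlMr ?exprn_gt0 // exprMn.
  have := crossc_sqr_le_of_near r_ge0 near; have := dotc_crossc_sqr A B; nra.
change (acos (cosangle A B) <= asin r).
apply: acos_le_asin; rewrite ?r_ge0 ?cosangle_itv //.
by rewrite -(ger0_norm cos_ge0) -sqrtr_sqr ler_wsqrtr.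
Qed.

Lemma cabs_sum_ge_cos_half (J : finType) (P : pred J) (b : J -> R[i]) (th : R) :
  0 <= th -> th < 2%:R * pi / 3%:R -> (forall j, P j -> b j != 0) ->
  (forall j l, P j -> P l -> cangle (b j) (b l) <= th) ->
  cos (th / 2%:R) * \sum_(j | P j) cabs (b j) <= cabs (\sum_(j | P j) b j).
Proof.
move=> th_ge0 th_lt b_neq0 b_angle.
have c_gt := cos_half_gt th_ge0 th_lt; set c := cos (th / 2%:R) in c_gt *.
have cos_th : cos th = 2 * c ^+ 2 - 1.
  rewrite /c -[in LHS](_ : (th / 2%:R) *+ 2 = th) ?cos_mulr2n; last by rewrite mulr2n; field.
  by rewrite -mulr_natl.
have cos_le : forall j l, P j -> P l -> cos th <= cosangle (b j) (b l).
  move=> j l Pj Pl; apply: cos_le_of_acos_le; rewrite ?cosangle_itv ?b_neq0 ?b_angle //.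
  by have := pi_gt0 R; rewrite th_ge0 /=; lra.
have := @cabs_sum_cone _ J P b _ b_neq0 cos_le; rewrite cos_th => /(_ ltac:(nra)).
rewrite addrC subrK -mulrA ler_pM2l // -!exprMn ler_sqr ?nnegrE ?cabs_ge0 //.
by rewrite mulr_ge0 ?sumr_ge0 // => [|j _]; [lra|exact: cabs_ge0].
Qed.

Lemma cangle_sum_le_asin (J : finType) (P : pred J) (a b : J -> R[i])
    (eps th : R) (j0 : J) :
  P j0 -> 0 <= eps -> 0 <= th -> th < 2%:R * pi / 3%:R -> eps < cos (th / 2%:R) ->
  (forall j, P j -> b j != 0 /\ cabs (a j / b j - 1) <= eps) ->
  (forall j l, P j -> P l -> cangle (b j) (b l) <= th) ->
  [/\ \sum_(j | P j) a j != 0, \sum_(j | P j) b j != 0 &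
      cangle (\sum_(j | P j) a j) (\sum_(j | P j) b j) <= asin (eps / cos (th / 2%:R))].
Proof.
move=> Pj0 eps_ge0 th_ge0 th_lt eps_lt ab b_angle.
have b_neq0 j : P j -> b j != 0 by case/ab.
have c_gt := cos_half_gt th_ge0 th_lt; set c := cos (th / 2%:R) in eps_lt c_gt *.
have cone := @cabs_sum_ge_cos_half J P b th th_ge0 th_lt b_neq0 b_angle; rewrite -/c in cone.
set S := \sum_(j | P j) cabs (b j) in cone.
set A := \sum_(j | P j) a j; set B := \sum_(j | P j) b j in cone *.
have S_gt0 : 0 < S.
  rewrite /S (bigD1 j0) //=; have := cabs_gt0 (b_neq0 _ Pj0).
  have : 0 <= \sum_(j | P j && (j != j0)) cabs (b j).
    by rewrite sumr_ge0 // => j _; exact: cabs_ge0.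
  lra.
have B0 : B != 0.
  by rewrite -cabs_eq0 gt_eqF //; apply: lt_le_trans cone; rewrite mulr_gt0 //; lra.
have AB_near : cabs (A - B) <= eps * S.
  rewrite /A /B -sumrB; apply: le_trans (ler_cabs_sum _ _ _) _.
  rewrite /S mulr_sumr; apply: ler_sum => j Pj; have [b0 ab_le] := ab j Pj.
  rewrite -[a j - b j](_ : b j * (a j / b j - 1) = _); last by rewrite mulrBr mulr1 mulrC divfK.
  by rewrite cabsM mulrC ler_wpM2r ?cabs_ge0.
have c_gt0 : 0 < c by lra.
have [A0 angle_le] : A != 0 /\ cangle A B <= asin (eps / c).
  apply: cangle_le_asin => //.
    by rewrite divr_ge0 ?(ltW c_gt0) //= ltr_pdivrMr // mul1r.
  by apply: le_trans AB_near _; rewrite -mulrA ler_wpM2l // ler_pdivlMl.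
by split.
Qed.

End Angles.

Lemma all2_rcons (S T : Type) (r : S -> T -> bool) s t x y : size s = size t ->
  all2 r (rcons s x) (rcons t y) = all2 r s t && r x y.
Proof.
elim: s t => [|a s IH] [|b t] //= => [_|[/IH ->]]; first by rewrite andbT.
by rewrite andbA.
Qed.

Lemma all2_eq_map {S T : eqType} {f : S -> T} {s t} :
  all2 (fun x y => f x == y) s t -> t = map f s.
Proof. by elim: s t => [|x s IH] [|y t] //= /andP[/eqP <- /IH <-]. Qed.

Lemma uniq_size_le_card {T : finType} {s : seq T} : uniq s -> (size s <= #|T|)%N.
Proof. by move/card_uniqP <-; exact: max_card. Qed.

Lemma exists_notin (T : finType) (s : seq T) : (size s < #|T|)%N -> exists x, x \notin s.
Proof.
move=> s_lt; apply/existsP; rewrite -negb_forall; apply: contraTN s_lt => /forallP s_all.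
rewrite -leqNgt (leq_trans _ (card_size s)) // subset_leq_card //.
by apply/subsetP => x _; rewrite -[x \in _]negbK s_all.
Qed.

Lemma sum_count_mem (k : nat) (s : seq 'I_k) : (\sum_(j < k) count_mem j s)%N = size s.
Proof.
elim: s => [|x s IH] /=; first by rewrite big1.
rewrite big_split /= IH (bigD1 x) //= eqxx big1 ?add1n // => j.
by rewrite eq_sym => /negbTE ->.
Qed.

Section Admissibility.
Context {k : nat} {mu : 'I_k -> nat}.

Lemma leq_sum_gt0 : (forall l, 0 < mu l)%N -> (k <= \sum_(l < k) mu l)%N.
Proof.
move=> mu_gt0; rewrite -[X in (X <= _)%N]card_ord -sum1_card.
by apply: leq_sum => l _; exact: mu_gt0.
Qed.

Lemma adm_I_rcons_lt s j : adm_I mu (rcons s j) -> (count_mem j s < mu j)%N.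
Proof. by move/forallP/(_ j); rewrite -cats1 count_cat /= eqxx addn1. Qed.

Lemma adm_I_rcons s j : adm_I mu s -> (count_mem j s < mu j)%N -> adm_I mu (rcons s j).
Proof.
move/forallP => s_adm j_lt; apply/forallP => l; rewrite -cats1 count_cat /= addn0.
by case: eqP => [<-|_]; rewrite ?addn1 ?addn0 ?s_adm.
Qed.

Lemma adm_I_rcons2C s i j :
  adm_I mu (rcons (rcons s i) j) = adm_I mu (rcons (rcons s j) i).
Proof. by apply: eq_forallb => l; rewrite -!cats1 !count_cat /= !addn0 addnAC. Qed.

Lemma adm_I_rcons_exists s : adm_I mu s -> (size s < \sum_(j < k) mu j)%N ->
  exists j, adm_I mu (rcons s j).
Proof.
move=> s_adm s_lt; have [j j_lt|all_full] := pickP (fun j => count_mem j s < mu j)%N.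
  by exists j; apply: adm_I_rcons.
suff : (\sum_(j < k) mu j <= size s)%N by rewrite leqNgt s_lt.
by rewrite -sum_count_mem leq_sum // => j _; rewrite leqNgt all_full.
Qed.

End Admissibility.

Section Fibers.
Context {V : finType} {k : nat} (phi : {ffun V -> 'I_k}).

Lemma count_le_card_fiber W j :
  uniq W -> (count (fun v => phi v == j) W <= #|phi @^-1: [set j]|)%N.
Proof.
move=> W_uniq; rewrite -size_filter cardE uniq_leq_size ?filter_uniq // => v.
by rewrite mem_filter mem_enum !inE => /andP[].
Qed.

Lemma card_fiber_notin W j : uniq W ->
  #|[pred v | (v \notin W) && (phi v == j)]| =
  (#|phi @^-1: [set j]| - count (fun v => phi v == j) W)%N.
Proof.
move=> W_uniq; have -> : count (fun v => phi v == j) W = #|[pred v in W | phi v == j]|.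
  rewrite -size_filter -(card_uniqP (filter_uniq _ W_uniq)).
  by apply: eq_card => v; rewrite !inE mem_filter andbC.
rewrite -(cardID (mem W) (phi @^-1: [set j])).
rewrite (eq_card (_ : [predI _ & _] =i [pred v in W | phi v == j])) ?addKn.
  by apply: eq_card => v; rewrite !inE andbC.
by move=> v; rewrite !inE andbC.
Qed.

End Fibers.

Section Qpoly.
Context {R : realType} {V : finType} (E : {set {set V}}) {k : nat}
  (mu : 'I_k -> nat) (Z : {set V} -> {set 'I_k} -> R[i]).
Local Notation Q := (Qpoly E mu Z).

Lemma Qpoly_rcons W I v : size W = size I ->
  Q W I = \sum_(j : 'I_k) Q (rcons W v) (rcons I j).
Proof.
move=> WI; rewrite /Qpoly (partition_big (fun phi : {ffun V -> 'I_k} => phi v) predT) //=.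
by apply: eq_bigr => j _; apply: eq_bigl => phi; rewrite all2_rcons // andbA.
Qed.

Lemma Qpoly_eq0 W I : uniq W -> ~~ adm_I mu I -> Q W I = 0.
Proof.
move=> W_uniq I_adm; rewrite /Qpoly big1 // => phi /andP[/forallP fibers /all2_eq_map I_W].
case/negP: I_adm; apply/forallP => i; rewrite I_W count_map -(eqP (fibers i)).
exact: count_le_card_fiber.
Qed.

Lemma Qpoly_rcons_adm W I v : uniq (rcons W v) -> size W = size I ->
  Q W I = \sum_(j | adm_I mu (rcons I j)) Q (rcons W v) (rcons I j).
Proof.
move=> Wv_uniq WI; rewrite (Qpoly_rcons _ _ v WI) (bigID (fun j => adm_I mu (rcons I j))) /=.
by rewrite [X in _ + X]big1 ?addr0 // => j; exact: Qpoly_eq0.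
Qed.

Lemma Qpoly_rcons2C W I u v i j : size W = size I ->
  Q (rcons (rcons W u) v) (rcons (rcons I i) j) = Q (rcons (rcons W v) u) (rcons (rcons I j) i).
Proof.
move=> WI; apply: eq_bigl => phi; rewrite !all2_rcons ?size_rcons ?WI //.
by case: (phi u == i); case: (phi v == j); rewrite /= ?andbT ?andbF.
Qed.

Lemma sum_Qpoly_rcons_notin W I j : uniq W -> size W = size I ->
  \sum_(v | v \notin W) Q (rcons W v) (rcons I j) = (mu j - count_mem j I)%:R * Q W I.
Proof.
move=> W_uniq WI; rewrite /Qpoly mulr_sumr.
under eq_bigr => v _ do under eq_bigl => phi do rewrite all2_rcons // andbA.
rewrite (exchange_big_dep (fun phi : {ffun V -> 'I_k} =>
    [forall i, #|phi @^-1: [set i]| == mu i] && all2 (fun v i => phi v == i) W I)) /=;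
  last by move=> v phi _ /andP[].
apply: eq_bigr => phi /andP[fibers W_I]; rewrite sumr_const mulr_natl; congr (_ *+ _).
rewrite (eq_card (_ : _ =i [pred v | (v \notin W) && (phi v == j)])); last first.
  by move=> v; rewrite !inE fibers W_I.
by rewrite card_fiber_notin // (eqP (forallP fibers j)) (all2_eq_map W_I) count_map.
Qed.

End Qpoly.

(* For #|V| <= 1 no (W, u, v) is admissible, so the hypotheses of the proposition
   are void and this degenerate case is settled directly. *)
Lemma Qpoly_card_le1 {R : realType} {V : finType} {E : {set {set V}}} {k : nat}
    {mu : 'I_k -> nat} (Z : {set V} -> {set 'I_k} -> R[i]) (u : V) (i : 'I_k) :
  simple_graph E -> (forall l, 0 < mu l)%N -> (\sum_(l < k) mu l)%N = #|V| ->
  (#|V| <= 1)%N -> Qpoly E mu Z [:: u] [:: i] != 0.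
Proof.
move=> E_simple mu_gt0 mu_sum V_le1.
have /fintype_le1P ord_eq : (#|'I_k| <= 1)%N.
  by rewrite card_ord (leq_trans (leq_sum_gt0 mu_gt0)) ?mu_sum.
have E0 : E = set0.
  apply/setP => A; rewrite inE; apply/negP => /E_simple A2.
  by have := leq_trans (max_card A) V_le1; rewrite A2.
pose phi0 : {ffun V -> 'I_k} := [ffun=> i].
rewrite /Qpoly E0; under eq_bigr => phi _ do rewrite big_set0.
rewrite sumr_const pnatr_eq0 -lt0n; apply/card_gt0P; exists phi0.
rewrite unfold_in /= ffunE eqxx !andbT; apply/forallP => l.
rewrite (ord_eq i l) (_ : _ @^-1: _ = setT); last by apply/setP => v; rewrite !inE ffunE eqxx.
by rewrite cardsT -mu_sum (big_pred1 i) // => j; rewrite /= (ord_eq i j) eqxx.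
Qed.

Lemma cangle_natrM (R : realType) (n m : nat) (x y : R[i]) : (0 < n)%N -> (0 < m)%N ->
  cangle (n%:R * x) (m%:R * y) = cangle x y.
Proof.
by move=> n_gt0 m_gt0; rewrite -!(rmorph_nat (real_complex R)) cangle_scale ?ltr0n.
Qed.

Section Proposition.
Context {R : realType} {V : finType} (E : {set {set V}}) {k : nat}
  (mu : 'I_k -> nat) (Z : {set V} -> {set 'I_k} -> R[i])
  (W : seq V) (I : seq 'I_k) (eps theta : R).
Hypotheses (mu_sum : (\sum_(l < k) mu l)%N = #|V|) (WI : size W = size I)
  (eps_ge0 : 0 <= eps) (theta_ge0 : 0 <= theta)
  (theta_lt : theta < 2%:R * pi / 3%:R) (eps_lt : eps < cos (theta / 2%:R)).
Local Notation Q := (Qpoly E mu Z).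
Local Notation bound := (asin (eps / cos (theta / 2%:R))).
Hypothesis Q_ratio : forall (u v : V) (i j : 'I_k),
  adm_W (rcons (rcons W u) v) -> adm_I mu (rcons (rcons I i) j) ->
  [/\ Q (rcons (rcons W u) v) (rcons (rcons I i) j) != 0,
      Q (rcons (rcons W u) v) (rcons (rcons I j) i) != 0 &
      cabs (Q (rcons (rcons W u) v) (rcons (rcons I i) j)
            / Q (rcons (rcons W u) v) (rcons (rcons I j) i) - 1) <= eps].

Lemma cangle_refl_le_bound x : x != 0 -> cangle x x <= bound.
Proof.
move=> x0; have c_gt := cos_half_gt theta_ge0 theta_lt.
have c_gt0 : 0 < cos (theta / 2%:R) by lra.
by rewrite cangle_refl // asin_ge0 // divr_ge0 ?(ltW c_gt0) //= ler_pdivrMr // mul1r ltW.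
Qed.

Lemma cangle_Qpoly_neq_vertices
    (angle_indices : forall (u v : V) (i j1 j2 : 'I_k),
      adm_W (rcons (rcons W u) v) ->
      adm_I mu (rcons (rcons I i) j1) -> adm_I mu (rcons (rcons I i) j2) ->
      cangle (Q (rcons (rcons W u) v) (rcons (rcons I i) j1))
             (Q (rcons (rcons W u) v) (rcons (rcons I i) j2)) <= theta)
    (u v : V) (i : 'I_k) :
  u != v -> adm_W (rcons W u) -> adm_W (rcons W v) -> adm_I mu (rcons I i) ->
  [/\ Q (rcons W u) (rcons I i) != 0, Q (rcons W v) (rcons I i) != 0 &
      cangle (Q (rcons W u) (rcons I i)) (Q (rcons W v) (rcons I i)) <= bound].
Proof.
move=> uv Wu Wv Ii.
have Wuv : adm_W (rcons (rcons W u) v).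
  by move: Wv Wu; rewrite /adm_W !rcons_uniq mem_rcons in_cons negb_or eq_sym uv => /andP[-> _].
have Wvu : adm_W (rcons (rcons W v) u).
  by move: Wu Wv; rewrite /adm_W !rcons_uniq mem_rcons in_cons negb_or uv => /andP[-> _].
have [j0 Iij0] : exists j, adm_I mu (rcons (rcons I i) j).
  apply: adm_I_rcons_exists => //; rewrite mu_sum.
  by have := uniq_size_le_card Wuv; rewrite !size_rcons WI.
have [] := @cangle_sum_le_asin _ _ (fun j => adm_I mu (rcons (rcons I i) j))
  (fun j => Q (rcons (rcons W u) v) (rcons (rcons I i) j))
  (fun j => Q (rcons (rcons W u) v) (rcons (rcons I j) i)) eps theta j0
  Iij0 eps_ge0 theta_ge0 theta_lt eps_lt.
- by move=> j Iij; have [_ -> ->] := Q_ratio _ _ _ _ Wuv Iij.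
- by move=> j l Iij Iil /=; rewrite !(Qpoly_rcons2C _ _ _ _ _ u v) //; exact: angle_indices.
rewrite -Qpoly_rcons_adm ?size_rcons ?WI //.
under eq_bigr => j _ do rewrite Qpoly_rcons2C //.
by rewrite -Qpoly_rcons_adm ?size_rcons ?WI.
Qed.

Lemma cangle_Qpoly_adm_indices
    (angle_vertices : forall (u v1 v2 : V) (i j : 'I_k),
      adm_W (rcons (rcons W u) v1) -> adm_W (rcons (rcons W u) v2) ->
      adm_I mu (rcons (rcons I i) j) ->
      cangle (Q (rcons (rcons W u) v1) (rcons (rcons I i) j))
             (Q (rcons (rcons W u) v2) (rcons (rcons I i) j)) <= theta)
    (u : V) (i j : 'I_k) :
  ((size W).+1 < #|V|)%N -> adm_W (rcons W u) -> adm_I mu (rcons (rcons I i) j) ->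
  [/\ Q (rcons W u) (rcons I i) != 0, Q (rcons W u) (rcons I j) != 0 &
      cangle (Q (rcons W u) (rcons I i)) (Q (rcons W u) (rcons I j)) <= bound].
Proof.
move=> W_lt Wu Iij; have Iji : adm_I mu (rcons (rcons I j) i) by rewrite adm_I_rcons2C.
have Wuv v : v \notin rcons W u -> adm_W (rcons (rcons W u) v).
  by move=> v_notin; rewrite /adm_W rcons_uniq v_notin.
have [v0 v0_notin] : exists v, v \notin rcons W u by apply: exists_notin; rewrite size_rcons.
have WIi : size (rcons W u) = size (rcons I i) by rewrite !size_rcons WI.
have WIj : size (rcons W u) = size (rcons I j) by rewrite !size_rcons WI.
have [] := @cangle_sum_le_asin _ _ (fun v => v \notin rcons W u)
  (fun v => Q (rcons (rcons W u) v) (rcons (rcons I i) j))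
  (fun v => Q (rcons (rcons W u) v) (rcons (rcons I j) i)) eps theta v0
  v0_notin eps_ge0 theta_ge0 theta_lt eps_lt.
- by move=> v v_notin; have [_ -> ->] := Q_ratio _ _ _ _ (Wuv v v_notin) Iij.
- by move=> v1 v2 /Wuv Wuv1 /Wuv Wuv2; exact: angle_vertices.
rewrite !sum_Qpoly_rcons_notin //.
have mult_gt0 l l' : adm_I mu (rcons (rcons I l) l') -> (0 < mu l' - count_mem l' (rcons I l))%N.
  by move/adm_I_rcons_lt; rewrite subn_gt0.
rewrite cangle_natrM ?mult_gt0 //.
by rewrite !mulf_eq0 !negb_or => /andP[_ ->] /andP[_ ->].
Qed.

Hypotheses (E_simple : simple_graph E) (mu_gt0 : forall l, (0 < mu l)%N)
  (W_size : (size W <= #|V| - 2)%N).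

Lemma nil_of_card_le1 : (#|V| <= 1)%N -> W = [::] /\ I = [::].
Proof.
move=> V_le1; have W0 : W = [::] by apply: size0nil; lia.
by split => //; apply: size0nil; rewrite -WI W0.
Qed.

Lemma cangle_Qpoly_rcons_vertices
    (angle_indices : forall (u v : V) (i j1 j2 : 'I_k),
      adm_W (rcons (rcons W u) v) ->
      adm_I mu (rcons (rcons I i) j1) -> adm_I mu (rcons (rcons I i) j2) ->
      cangle (Q (rcons (rcons W u) v) (rcons (rcons I i) j1))
             (Q (rcons (rcons W u) v) (rcons (rcons I i) j2)) <= theta)
    (u v : V) (i : 'I_k) :
  adm_W (rcons W u) -> adm_W (rcons W v) -> adm_I mu (rcons I i) ->
  [/\ Q (rcons W u) (rcons I i) != 0, Q (rcons W v) (rcons I i) != 0 &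
      cangle (Q (rcons W u) (rcons I i)) (Q (rcons W v) (rcons I i)) <= bound].
Proof.
move=> Wu Wv Ii; have [V_le1|V_gt1] := leqP #|V| 1.
  have [-> ->] := nil_of_card_le1 V_le1; rewrite (fintype_le1P V_le1 u v) /=.
  have Q0 := Qpoly_card_le1 Z u i E_simple mu_gt0 mu_sum V_le1.
  by split; rewrite ?cangle_refl_le_bound.
have [<-|uv] := eqVneq u v; last exact: cangle_Qpoly_neq_vertices.
have [w w_notin] : exists w, w \notin rcons W u.
  by apply: exists_notin; rewrite size_rcons; lia.
have Ww : adm_W (rcons W w).
  by move: Wu w_notin; rewrite /adm_W !rcons_uniq mem_rcons in_cons negb_or => /andP[_ ->] /andP[_ ->].
have uw : u != w by apply: contraNneq w_notin => <-; rewrite mem_rcons mem_head.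
have [Q0 _ _] := cangle_Qpoly_neq_vertices angle_indices _ _ _ uw Wu Ww Ii.
by split; rewrite ?cangle_refl_le_bound.
Qed.

Lemma cangle_Qpoly_rcons_indices
    (angle_vertices : forall (u v1 v2 : V) (i j : 'I_k),
      adm_W (rcons (rcons W u) v1) -> adm_W (rcons (rcons W u) v2) ->
      adm_I mu (rcons (rcons I i) j) ->
      cangle (Q (rcons (rcons W u) v1) (rcons (rcons I i) j))
             (Q (rcons (rcons W u) v2) (rcons (rcons I i) j)) <= theta)
    (u : V) (i j : 'I_k) :
  adm_W (rcons W u) -> adm_I mu (rcons I i) -> adm_I mu (rcons I j) ->
  [/\ Q (rcons W u) (rcons I i) != 0, Q (rcons W u) (rcons I j) != 0 &
      cangle (Q (rcons W u) (rcons I i)) (Q (rcons W u) (rcons I j)) <= bound].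
Proof.
move=> Wu Ii Ij; have [V_le1|V_gt1] := leqP #|V| 1.
  have [-> ->] := nil_of_card_le1 V_le1.
  have /fintype_le1P ord_eq : (#|'I_k| <= 1)%N.
    by rewrite card_ord (leq_trans (leq_sum_gt0 mu_gt0)) ?mu_sum.
  rewrite (ord_eq i j) /=; have Q0 := Qpoly_card_le1 Z u i E_simple mu_gt0 mu_sum V_le1.
  by split; rewrite ?cangle_refl_le_bound.
have W_lt : ((size W).+1 < #|V|)%N by lia.
have [Iij|Iij] := boolP (adm_I mu (rcons (rcons I i) j)).
  exact: cangle_Qpoly_adm_indices.
have <- : i = j.
  apply/eqP; apply: contraNT Iij => ij; apply: adm_I_rcons => //.
  by rewrite -cats1 count_cat /= (negbTE ij) addn0 addnC; exact: adm_I_rcons_lt Ij.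
have [l Iil] : exists l, adm_I mu (rcons (rcons I i) l).
  by apply: adm_I_rcons_exists; rewrite // mu_sum size_rcons -WI.
have [Q0 _ _] := cangle_Qpoly_adm_indices angle_vertices _ _ _ W_lt Wu Iil.
by split; rewrite ?cangle_refl_le_bound.
Qed.

End Proposition.

Theorem proposition4p3 (R : realType) (V : finType) (E : {set {set V}})
    (k : nat) (mu : 'I_k -> nat)
    (Z : {set V} -> {set 'I_k} -> R[i])
    (W : seq V) (I : seq 'I_k) (eps theta : R) :
  simple_graph E ->
  (forall i, (0 < mu i)%N) ->
  (\sum_(i < k) mu i)%N = #|V| ->
  adm_W W -> adm_I mu I ->
  size W = size I -> (size W <= #|V| - 2)%N ->
  0 < eps -> 0 <= theta -> theta < 2%:R * pi / 3%:R ->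
  eps < cos (theta / 2%:R) ->
  (forall (u v : V) (i j : 'I_k),
     adm_W (rcons (rcons W u) v) -> adm_I mu (rcons (rcons I i) j) ->
     [/\ Qpoly E mu Z (rcons (rcons W u) v) (rcons (rcons I i) j) != 0,
         Qpoly E mu Z (rcons (rcons W u) v) (rcons (rcons I j) i) != 0 &
         cabs (Qpoly E mu Z (rcons (rcons W u) v) (rcons (rcons I i) j)
               / Qpoly E mu Z (rcons (rcons W u) v) (rcons (rcons I j) i) - 1)
           <= eps]) ->
  ((forall (u v : V) (i j1 j2 : 'I_k),
      adm_W (rcons (rcons W u) v) ->
      adm_I mu (rcons (rcons I i) j1) -> adm_I mu (rcons (rcons I i) j2) ->
      cangle (Qpoly E mu Z (rcons (rcons W u) v) (rcons (rcons I i) j1))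
             (Qpoly E mu Z (rcons (rcons W u) v) (rcons (rcons I i) j2))
        <= theta) ->
   forall (u v : V) (i : 'I_k),
     adm_W (rcons W u) -> adm_W (rcons W v) -> adm_I mu (rcons I i) ->
     [/\ Qpoly E mu Z (rcons W u) (rcons I i) != 0,
         Qpoly E mu Z (rcons W v) (rcons I i) != 0 &
         cangle (Qpoly E mu Z (rcons W u) (rcons I i))
                (Qpoly E mu Z (rcons W v) (rcons I i))
           <= asin (eps / cos (theta / 2%:R))])
  /\
  ((forall (u v1 v2 : V) (i j : 'I_k),
      adm_W (rcons (rcons W u) v1) -> adm_W (rcons (rcons W u) v2) ->
      adm_I mu (rcons (rcons I i) j) ->
      cangle (Qpoly E mu Z (rcons (rcons W u) v1) (rcons (rcons I i) j))
             (Qpoly E mu Z (rcons (rcons W u) v2) (rcons (rcons I i) j))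
        <= theta) ->
   forall (u : V) (i j : 'I_k),
     adm_W (rcons W u) -> adm_I mu (rcons I i) -> adm_I mu (rcons I j) ->
     [/\ Qpoly E mu Z (rcons W u) (rcons I i) != 0,
         Qpoly E mu Z (rcons W u) (rcons I j) != 0 &
         cangle (Qpoly E mu Z (rcons W u) (rcons I i))
                (Qpoly E mu Z (rcons W u) (rcons I j))
           <= asin (eps / cos (theta / 2%:R))]).
Proof.
(* adm_W W and adm_I mu I follow from the admissibility of the extended sequences. *)
move=> E_simple mu_gt0 mu_sum _ _ WI W_size eps_gt0 theta_ge0 theta_lt eps_lt Q_ratio.
have eps_ge0 := ltW eps_gt0.
by split; [apply: cangle_Qpoly_rcons_vertices | apply: cangle_Qpoly_rcons_indices].
Qed.
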